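(* Let $G'$ be a connected graph, let $w$ be a vertex of $G'$, let $k\ge 2$, and let $G$ be obtained from $G'$ by adding $k$ new vertices $1,\dots,k$, each adjacent only to $w$. Let $\Delta$ be the distance squared matrix of $G$, let $\Delta_k$ be the distance squared matrix of the graph $G\setminus\{1,\dots,k-1\}$ (that is, $G'$ with the single pendant vertex $k$ attached at $w$), and let $\mathbf e_k$ be the standard basis vector corresponding to vertex $k$ in the index set of $\Delta_k$. Then \[ i_-(\Delta)=k-1+i_-\!\left(\Delta_k+\left(4-\tfrac{4}{k}\right)\mathbf e_k\mathbf e_k^T\right). \]
   Context: For a connected graph $G$ with vertices $1,\dots,n$, the distance squared matrix $\Delta$ is the $n\times n$ matrix with $(i,j)$ entry $d_{ij}^2$, where $d_{ij}$ is the graph distance between $i$ and $j$. For a real symmetric matrix $M$, $i_-(M)$ denotes the number of negative eigenvalues of $M$ counted with multiplicity. *)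

From HB Require Import structures.
From mathcomp Require Import all_boot all_order all_algebra.
From mathcomp Require Import polyrcf.
Set Implicit Arguments. Unset Strict Implicit. Unset Printing Implicit Defensive.
Import Order.TTheory GRing.Theory Num.Theory.
Local Open Scope ring_scope.

(* A graph on a finite vertex type V is given by its adjacency relation e;
   it is a simple graph when e is symmetric and irreflexive. *)

Definition walkb (V : finType) (e : rel V) (x y : V) (n : nat) : bool :=
  [exists p : n.-tuple V, path e x p && (last x p == y)].

(* graph distance: the least n (< #|V|) such that a walk of length n from x
   to y exists; for connected graphs this is the usual distance d(x,y). *)
Definition gdist (V : finType) (e : rel V) (x y : V) : nat :=
  find (walkb e x y) (iota 0 #|V|).

Definition connected_graph (V : finType) (e : rel V) : Prop :=
  forall x y : V, connect e x y.

Definition dsq_mx (R : pzRingType) (V : finType) (e : rel V) : 'M[R]_#|V| :=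
  \matrix_(i, j) ((gdist e (enum_val i) (enum_val j)) ^ 2)%:R.

Definition neg_inertia (R : rcfType) (n : nat) (M : 'M[R]_n) : nat :=
  (\sum_(x <- rootsR (char_poly M) | (x < 0)%R) mup x (char_poly M))%N.

Definition add_pendants (V : finType) (e : rel V) (w : V) (k : nat)
  : rel (V + 'I_k)%type :=
  fun a b => match a, b with
             | inl x, inl y => e x y
             | inl x, inr _ => x == w
             | inr _, inl y => y == w
             | inr _, inr _ => false
             end.

Arguments add_pendants {V} e w k.
Arguments dsq_mx R {V} e.
Arguments neg_inertia {R n} M.
Arguments gdist {V} e x y.

From HB Require Import structures.
From mathcomp Require Import all_boot all_order all_algebra.
From mathcomp Require Import polyrcf complex spectral sesquilinear.
From mathcomp Require Import zify ring.
Set Implicit Arguments. Unset Strict Implicit. Unset Printing Implicit Defensive.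
Import Order.TTheory GRing.Theory Num.Theory.
Local Open Scope ring_scope.

(* Let L be the matrix that is the identity on the vertices of G' and averages
   the k pendant coordinates into one, and let E have the k-1 rows e_i - e_0 for
   the pendants i <> 0.  Pendants are pairwise at distance 2 and equidistant
   from every other vertex, hence E Delta = -4 E, L E^T = 0 and
   L Delta L^T = Delta_k + (4 - 4/k) e_k e_k^T.  Since the rows of L and E
   together form a basis, Sylvester's law of inertia gives
   i_-(Delta) = i_-(L Delta L^T) + (k - 1).  The law itself is obtained from
   the description of i_-(A) as the largest dimension of a subspace on which
   the form of A is negative definite, via the spectral theorem for the
   hermitian matrix A over R[i]. *)

Lemma sum_mup_rootsR_prod_XsubC (R : rcfType) (s : seq R) (P : pred R) :
  let p := \prod_(y <- s) ('X - y%:P) in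
  (\sum_(x <- rootsR p | P x) mup x p)%N = count P s.
Proof.
move=> p; have pn0 : p != 0 by rewrite monic_neq0 // monic_prod_XsubC.
have roots_undup : perm_eq (rootsR p) (undup s).
  apply: uniq_perm; rewrite ?undup_uniq ?uniq_roots // => x.
  by rewrite mem_undup -(roots_on_rootsR pn0 x) in_itv /= root_prod_XsubC.
rewrite (perm_big _ roots_undup) -sum1_count -[RHS](big_undup_iterop_count addn).
by apply: eq_bigr => x _; rewrite mu_prod_XsubC Monoid.iteropE iter_addn_0 mul1n.
Qed.

Lemma char_poly_similar (R : comNzRingType) n (P Q A : 'M[R]_n) :
  P *m Q = 1%:M -> char_poly (P *m A *m Q) = char_poly A.
Proof.
move=> PQ; rewrite /char_poly.
have -> : char_poly_mx (P *m A *m Q) =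
    map_mx polyC P *m char_poly_mx A *m map_mx polyC Q.
  rewrite /char_poly_mx mulmxBr mulmxBl -!map_mxM; congr (_ - _).
  by rewrite mul_mx_scalar -scalemxAl -map_mxM PQ map_mx1 scalemx1.
by rewrite !det_mulmx mulrC mulrA -det_mulmx -map_mxM (mulmx1C PQ) map_mx1 det1 mul1r.
Qed.

Section HermitianForm.
Variable C : numClosedFieldType.
Local Open Scope sesquilinear_scope.

Definition hform p q (H : 'M[C]_(p, q)) (x : 'rV_p) (y : 'rV_q) : C :=
  (x *m H *m y^t*) 0 0.

Definition negdef_on n (H : 'M[C]_n) m (W : 'M[C]_(m, n)) :=
  forall x : 'rV_n, (x <= W)%MS -> x != 0 -> hform H x x < 0.

Definition nonneg_on n (H : 'M[C]_n) m (S : 'M[C]_(m, n)) :=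
  forall x : 'rV_n, (x <= S)%MS -> 0 <= hform H x x.

Lemma hformM p q r s (A : 'M[C]_(r, p)) (H : 'M[C]_(p, q)) (B : 'M[C]_(s, q)) x y :
  hform H (x *m A) (y *m B) = hform (A *m H *m B^t*) x y.
Proof. by rewrite /hform trmx_mul map_mxM !mulmxA. Qed.

Lemma hform0r p q (H : 'M[C]_(p, q)) x : hform H x 0 = 0.
Proof. by rewrite /hform linear0 map_mx0 mulmx0 mxE. Qed.

Lemma hformDD n (H : 'M[C]_n) x y :
  hform H (x + y) (x + y) = hform H x x + hform H y y + hform H x y + hform H y x.
Proof.
by rewrite /hform linearD /= map_mxD !mulmxDl !mulmxDr !mxE; ring.
Qed.

Lemma hform_diag n (d : 'rV[C]_n) (y : 'rV[C]_n) :
  hform (diag_mx d) y y = \sum_j d 0 j * (y 0 j * (y 0 j)^*).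
Proof.
by rewrite /hform mul_mx_diag mxE; apply: eq_bigr => j _; rewrite !mxE mulrAC mulrC.
Qed.

Lemma hform_diag_ge0 n (d : 'rV[C]_n) (y : 'rV[C]_n) :
  (forall j, y 0 j != 0 -> 0 <= d 0 j) -> 0 <= hform (diag_mx d) y y.
Proof.
move=> d_ge0; rewrite hform_diag; apply: sumr_ge0 => j _.
have [->|yj] := eqVneq (y 0 j) 0; first by rewrite mul0r mulr0.
by rewrite mulr_ge0 ?d_ge0 ?mul_conjC_ge0.
Qed.

Lemma hform_diag_lt0 n (d : 'rV[C]_n) (y : 'rV[C]_n) : y != 0 ->
  (forall j, y 0 j != 0 -> d 0 j < 0) -> hform (diag_mx d) y y < 0.
Proof.
move=> yn0 d_lt0; have [j yj] : exists j, y 0 j != 0.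
  apply/existsP; apply: contraR yn0 => /existsPn y0.
  by apply/eqP/rowP => j; rewrite mxE; apply/eqP/negbNE.
rewrite hform_diag (bigD1 j) //= -[X in _ < X](addr0 0) ltr_leD //.
  by rewrite pmulr_llt0 ?mul_conjC_gt0 ?d_lt0.
apply: sumr_le0 => i _; have [->|yi] := eqVneq (y 0 i) 0; first by rewrite mul0r mulr0.
by rewrite mulr_le0_ge0 ?mul_conjC_ge0 // ltW ?d_lt0.
Qed.

Lemma hform_scalar_lt0 n (a : C) (y : 'rV[C]_n) :
  a < 0 -> y != 0 -> hform a%:M y y < 0.
Proof.
by move=> a_lt0 yn0; rewrite -diag_const_mx hform_diag_lt0 // => j; rewrite mxE.
Qed.

Lemma hform_scalar_le0 n (a : C) (y : 'rV[C]_n) : a < 0 -> hform a%:M y y <= 0.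
Proof.
move=> a_lt0; have [->|yn0] := eqVneq y 0; first by rewrite hform0r.
exact/ltW/hform_scalar_lt0.
Qed.

Lemma rank_negdef_nonneg n (H : 'M[C]_n) m1 m2 (W : 'M_(m1, n)) (S : 'M_(m2, n)) :
  negdef_on H W -> nonneg_on H S -> (\rank W + \rank S <= n)%N.
Proof.
move=> W_neg S_nneg; have WS0 : (W :&: S)%MS == 0.
  apply/rowV0P => v vWS; apply/eqP; apply: contraT => vn0.
  have v_neg := W_neg v (submx_trans vWS (capmxSl _ _)) vn0.
  by have := S_nneg v (submx_trans vWS (capmxSr _ _)); rewrite (lt_geF v_neg).
by rewrite -mxrank_sum_cap (eqP WS0) mxrank0 addn0 rank_leq_col.
Qed.

Section Diagonalized.
Variables (n : nat) (U : 'M[C]_n) (d : 'rV[C]_n).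
Hypotheses (U_unitary : U \is unitarymx) (d_real : forall j, d 0 j \is Num.real).
Let H := U^t* *m diag_mx d *m U.
Local Notation neg := [set j | d 0 j < 0].

Definition rows_on (B : {set 'I_n}) : 'M[C]_(#|B|, n) :=
  rowsub (fun r : 'I_#|B| => enum_val r) U.

Lemma hform_unitary_diag x :
  hform H x x = hform (diag_mx d) (x *m U^t*) (x *m U^t*).
Proof. by rewrite hformM trmxCK. Qed.

Lemma rank_rows_on B : \rank (rows_on B) = #|B|.
Proof.
apply/eqP; rewrite eqn_leq rank_leq_row.
apply: (mulmx1_min_rank (M := 1%:M)
  (N := U^t* *m (rowsub (fun r : 'I_#|B| => enum_val r) 1%:M)^T)).
rewrite mul1mx mulmxA /rows_on rowsubE mulmxtVK //.
apply/matrixP => r r'; rewrite mul_rowsub_mx !mxE (bigD1 (enum_val r)) //=.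
rewrite big1 ?addr0 => [|j /negPf jr]; last by rewrite !mxE eq_sym jr mul0r.
by rewrite !mxE eqxx mul1r (inj_eq enum_val_inj) eq_sym.
Qed.

Lemma rows_on_coord B (x : 'rV[C]_n) j :
  (x <= rows_on B)%MS -> j \notin B -> (x *m U^t*) 0 j = 0.
Proof.
move=> /submxP [z ->] jB; rewrite /rows_on rowsubE mulmxA mulmxtVK // !mxE.
rewrite big1 // => r _; rewrite !mxE; have [rj|] := eqVneq j (enum_val r).
  by move: jB; rewrite rj enum_valP.
by rewrite mulr0.
Qed.

Lemma negdef_on_rows_neg : negdef_on H (rows_on neg).
Proof.
move=> x xW xn0; rewrite hform_unitary_diag; apply: hform_diag_lt0.
  by apply: contra xn0 => /eqP y0; rewrite -(mulmxKtV x U_unitary) // y0 mul0mx.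
by move=> j; apply: contraR => dj; rewrite (rows_on_coord xW) // inE.
Qed.

Lemma nonneg_on_rows_nonneg : nonneg_on H (rows_on (~: neg)).
Proof.
move=> x xS; rewrite hform_unitary_diag; apply: hform_diag_ge0 => j.
apply: contraR; rewrite -real_ltNge ?real0 // => dj.
by rewrite (rows_on_coord xS) // !inE dj.
Qed.

Lemma rank_negdef_le m (W : 'M_(m, n)) : negdef_on H W -> (\rank W <= #|neg|)%N.
Proof.
have neg_le : (#|neg| <= n)%N by rewrite -[n in (_ <= n)%N]card_ord max_card.
move=> /rank_negdef_nonneg /(_ nonneg_on_rows_nonneg).
by rewrite rank_rows_on cardsCs setCK card_ord; move: #|neg| neg_le => a; lia.
Qed.

Lemma rank_nonneg_le m (S : 'M_(m, n)) : nonneg_on H S -> (\rank S <= n - #|neg|)%N.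
Proof.
move=> /(rank_negdef_nonneg negdef_on_rows_neg).
by rewrite rank_rows_on; move: #|neg| => a; lia.
Qed.

End Diagonalized.
End HermitianForm.

Section RealSymmetric.
Variable R : rcfType.
Local Notation phi := (real_complex R).
Local Open Scope sesquilinear_scope.

Lemma map_real_complex_trmxC m n (B : 'M[R]_(m, n)) :
  (map_mx phi B)^t* = map_mx phi B^T.
Proof.
by apply/matrixP => i j; rewrite !mxE conj_Creal //; apply/complex_realP; exists (B j i).
Qed.

Lemma hform_map_real_complex n m1 m2 (D : 'M[R]_n) (B1 : 'M[R]_(m1, n))
    (B2 : 'M[R]_(m2, n)) u v :
  hform (map_mx phi D) (u *m map_mx phi B1) (v *m map_mx phi B2)
  = hform (map_mx phi (B1 *m D *m B2^T)) u v.
Proof. by rewrite hformM map_real_complex_trmxC !map_mxM. Qed.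

Section Symmetric.
Variables (n : nat) (A : 'M[R]_n).
Hypothesis A_sym : A^T = A.
Local Notation P := (spectralmx (map_mx phi A)).
Local Notation d := (spectral_diag (map_mx phi A)).

Lemma hermsymmx_map_real_complex : map_mx phi A \is hermsymmx.
Proof.
apply: realsym_hermsym.
  by apply/is_hermitianmxP; rewrite expr0 scale1r map_mx_id // map_trmx A_sym.
by apply/mxOverP => i j; rewrite mxE; apply/complex_realP; exists (A i j).
Qed.

Lemma spectral_real_sym : map_mx phi A = P^t* *m diag_mx d *m P.
Proof.
have /hermitian_normalmx/orthomx_spectralP := hermsymmx_map_real_complex.
by rewrite invmx_unitary // spectral_unitarymx.
Qed.

Lemma spectral_diag_real_sym j : d 0 j \is Num.real.
Proof.
by have /mxOverP := hermitian_spectral_diag_real hermsymmx_map_real_complex; apply.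
Qed.

Lemma neg_inertia_spectral_diag : neg_inertia A = #|[set j | d 0 j < 0]|.
Proof.
pose r j := complex.Re (d 0 j).
have rE j : phi (r j) = d 0 j by rewrite RRe_real // spectral_diag_real_sym.
have char_A : char_poly A = \prod_(y <- [seq r j | j <- enum 'I_n]) ('X - y%:P).
  apply: (@map_poly_inj _ _ phi).
  rewrite map_char_poly spectral_real_sym char_poly_similar; last first.
    by have := mulmxKtV 1%:M (spectral_unitarymx (map_mx phi A)) erefl; rewrite !mul1mx.
  rewrite char_poly_trig ?diag_mx_is_trig // rmorph_prod big_map big_enum /=.
  by apply: eq_bigr => j _; rewrite map_polyXsubC mxE eqxx mulr1n -[d 0 j]rE.
rewrite /neg_inertia char_A sum_mup_rootsR_prod_XsubC count_map cardE size_filter -enumT.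
by apply: eq_count => j; rewrite /= inE -rE -ltcR.
Qed.

Lemma neg_inertia_le : (neg_inertia A <= n)%N.
Proof. by rewrite neg_inertia_spectral_diag -[n in (_ <= n)%N]card_ord max_card. Qed.

Lemma rank_negdef_le_neg_inertia m (W : 'M_(m, n)) :
  negdef_on (map_mx phi A) W -> (\rank W <= neg_inertia A)%N.
Proof.
move=> W_neg; rewrite neg_inertia_spectral_diag.
apply: (rank_negdef_le (spectral_unitarymx (map_mx phi A)) spectral_diag_real_sym).
by rewrite -spectral_real_sym.
Qed.

Lemma rank_nonneg_le_neg_inertia m (S : 'M_(m, n)) :
  nonneg_on (map_mx phi A) S -> (\rank S <= n - neg_inertia A)%N.
Proof.
move=> S_nneg; rewrite neg_inertia_spectral_diag.
apply: (rank_nonneg_le (spectral_unitarymx (map_mx phi A))).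
by rewrite -spectral_real_sym.
Qed.

Lemma negdef_on_neg_inertia : exists m,
  exists2 W : 'M_(m, n), negdef_on (map_mx phi A) W & \rank W = neg_inertia A.
Proof.
rewrite neg_inertia_spectral_diag; exists _, (rows_on P [set j | d 0 j < 0]).
  rewrite [in X in negdef_on X]spectral_real_sym.
  exact/negdef_on_rows_neg/spectral_unitarymx.
exact/rank_rows_on/spectral_unitarymx.
Qed.

Lemma nonneg_on_neg_inertia : exists m,
  exists2 S : 'M_(m, n), nonneg_on (map_mx phi A) S & \rank S = (n - neg_inertia A)%N.
Proof.
rewrite neg_inertia_spectral_diag; exists _, (rows_on P (~: [set j | d 0 j < 0])).
  rewrite [in X in nonneg_on X]spectral_real_sym.
  exact/nonneg_on_rows_nonneg/spectral_diag_real_sym/spectral_unitarymx.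
by rewrite rank_rows_on ?spectral_unitarymx // cardsCs setCK card_ord.
Qed.

End Symmetric.
End RealSymmetric.

Section Deflation.
Variables (R : rcfType) (n m p : nat) (c : R).
Variables (D : 'M[R]_n) (L : 'M[R]_(m, n)) (E : 'M[R]_(p, n)).
Hypotheses (D_sym : D^T = D) (c_lt0 : c < 0) (ED : E *m D = c *: E).
Hypotheses (LE : L *m E^T = 0) (L_free : row_free L) (E_free : row_free E).
Hypothesis (n_eq : n = (m + p)%N).
Local Notation phi := (real_complex R).
Local Notation M := (L *m D *m L^T).

Lemma hform_deflation_cross u v :
  hform (map_mx phi D) (u *m map_mx phi L) (v *m map_mx phi E) = 0.
Proof.
have LDE : L *m D *m E^T = 0.
  by rewrite -mulmxA -[D]D_sym -trmx_mul ED linearZ /= -scalemxAr LE scaler0.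
by rewrite hform_map_real_complex LDE map_mx0 /hform mulmx0 mul0mx mxE.
Qed.

Lemma hform_deflation_crossC u v :
  hform (map_mx phi D) (v *m map_mx phi E) (u *m map_mx phi L) = 0.
Proof.
have EDL : E *m D *m L^T = 0.
  by rewrite ED -scalemxAl -[E *m L^T]trmxK trmx_mul trmxK LE trmx0 scaler0.
by rewrite hform_map_real_complex EDL map_mx0 /hform mulmx0 mul0mx mxE.
Qed.

Lemma hform_deflation_L u :
  hform (map_mx phi D) (u *m map_mx phi L) (u *m map_mx phi L)
  = hform (map_mx phi M) u u.
Proof. exact: hform_map_real_complex. Qed.

Lemma hform_deflation_E v :
  hform (map_mx phi D) (v *m map_mx phi E) (v *m map_mx phi E)
  = hform (phi c)%:M (v *m map_mx phi E) (v *m map_mx phi E).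
Proof.
rewrite hform_map_real_complex hformM map_real_complex_trmxC -map_scalar_mx -!map_mxM.
by rewrite ED mul_mx_scalar.
Qed.

Let M_sym : M^T = M.
Proof. by rewrite !trmx_mul trmxK D_sym mulmxA. Qed.

Lemma neg_inertia_deflation_ge : (neg_inertia M + p <= neg_inertia D)%N.
Proof.
have phic_lt0 : phi c < 0 by rewrite -(rmorph0 phi) ltcR.
have [m' [N N_neg rankN]] := negdef_on_neg_inertia M_sym.
pose W := (N *m map_mx phi L + map_mx phi E)%MS.
have W_neg : negdef_on (map_mx phi D) W.
  move=> x /sub_addsmxP [[a b] /= ->] xn0.
  rewrite mulmxA hformDD hform_deflation_L hform_deflation_E.
  rewrite hform_deflation_cross hform_deflation_crossC !addr0.
  have [aN0|aN] := eqVneq (a *m N) 0.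
    move: xn0; rewrite mulmxA aN0 mul0mx add0r => yn0.
    by rewrite /hform !mul0mx mxE add0r hform_scalar_lt0.
  by rewrite -[X in _ < X](addr0 0) ltr_leD ?hform_scalar_le0 // N_neg // submxMl.
have NLE0 : (N *m map_mx phi L :&: map_mx phi E)%MS = 0.
  apply/eqP/rowV0P => v vNLE; apply/eqP; apply: contraT => vn0.
  have vNL := submx_trans vNLE (capmxSl _ _).
  have vW : (v <= W)%MS := submx_trans vNL (addsmxSl _ _).
  have /submxP [a va] := vNL.
  have /submxP [b vb] := submx_trans vNLE (capmxSr _ _).
  by have := W_neg v vW vn0; rewrite {1}va mulmxA vb hform_deflation_cross ltxx.
have := rank_negdef_le_neg_inertia D_sym W_neg.
rewrite mxrank_disjoint_sum // mxrank_map mxrankMfree ?rankN.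
  by move/eqP: E_free => ->.
by rewrite /row_free mxrank_map.
Qed.

Lemma neg_inertia_deflation_le : (neg_inertia D <= neg_inertia M + p)%N.
Proof.
have [m' [S S_nneg rankS]] := nonneg_on_neg_inertia M_sym.
have SL_nneg : nonneg_on (map_mx phi D) (S *m map_mx phi L).
  by move=> x /submxP [a ->]; rewrite mulmxA hform_deflation_L S_nneg ?submxMl.
have := rank_nonneg_le_neg_inertia D_sym SL_nneg.
rewrite mxrankMfree ?rankS; last by rewrite /row_free mxrank_map.
by have := neg_inertia_le D_sym; lia.
Qed.

Lemma neg_inertia_deflation : neg_inertia D = (neg_inertia M + p)%N.
Proof.
by apply/eqP; rewrite eqn_leq neg_inertia_deflation_le neg_inertia_deflation_ge.
Qed.

End Deflation.

Lemma walkbP (T : finType) (e : rel T) (x y : T) n :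
  reflect (exists p : seq T, [/\ size p = n, path e x p & last x p = y])
          (walkb e x y n).
Proof.
apply: (iffP existsP) => [[p /andP [ep /eqP py]] | [p [sp ep py]]].
  by exists p; rewrite size_tuple.
have sp' : size p == n by rewrite sp.
by exists (Tuple sp'); rewrite /= ep py eqxx.
Qed.

Section Walks.
Variable T : finType.
Implicit Types (e : rel T) (x y : T).

Lemma walkb_homo (T' : finType) e (e' : rel T') (f : T -> T') x y n :
  {homo f : a b / e a b >-> e' a b} -> walkb e x y n -> walkb e' (f x) (f y) n.
Proof.
move=> f_homo /walkbP [p [sp ep py]]; apply/walkbP; exists (map f p).
by rewrite size_map last_map py (homo_path f_homo ep).
Qed.

Lemma walkb_sym e x y n : symmetric e -> walkb e x y n -> walkb e y x n.
Proof.
move=> e_sym /walkbP [p [sp ep py]]; apply/walkbP; exists (rev (belast x p)).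
split; first by rewrite size_rev size_belast.
  by rewrite -py rev_path (@eq_path _ (fun z => e^~ z) e) // => a b /=; apply: e_sym.
by case: p sp ep py => [|z p] _ _ /= py; rewrite ?py // rev_cons last_rcons.
Qed.

Lemma gdist_sym e x y : symmetric e -> gdist e x y = gdist e y x.
Proof. by move=> e_sym; apply: eq_find => n; apply/idP/idP; apply: walkb_sym. Qed.

Lemma gdistxx e x : gdist e x x = 0%N.
Proof.
rewrite /gdist; have : (0 < #|T|)%N by apply/card_gt0P; exists x.
case: #|T| => // N _ /=.
by have -> : walkb e x x 0 by apply/walkbP; exists [::].
Qed.

Lemma connect_walkb e x y : connect e x y -> exists2 n, (n < #|T|)%N & walkb e x y n.
Proof.
move=> /connectP [p ep ->]; case/shortenP: ep => p' ep' up' _.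
exists (size p'); last by apply/walkbP; exists p'.
by have := max_card (mem (x :: p')); rewrite (card_uniqP up') /=; lia.
Qed.

Lemma eq_gdist (T' : finType) e (e' : rel T') x y (x' y' : T') :
  (forall n, walkb e x y n = walkb e' x' y' n) -> (#|T| <= #|T'|)%N ->
  connect e x y -> gdist e x y = gdist e' x' y'.
Proof.
move=> walk_eq card_le /connect_walkb [n0 n0_lt walk0].
rewrite /gdist -(eq_find walk_eq) -(subnKC card_le) iotaD find_cat.
suff -> : has (walkb e x y) (iota 0 #|T|) by [].
by apply/hasP; exists n0; rewrite ?mem_iota.
Qed.

Lemma dsq_mx_sym (R : pzRingType) e : symmetric e -> (dsq_mx R e)^T = dsq_mx R e.
Proof. by move=> e_sym; apply/matrixP => i j; rewrite !mxE gdist_sym. Qed.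

End Walks.

Section Pendants.
Variables (V : finType) (e : rel V) (w : V).
Hypothesis e_sym : symmetric e.

Lemma add_pendants_sym k : symmetric (add_pendants e w k).
Proof. by case=> [u|i] [v|j] //=; rewrite e_sym. Qed.

Lemma add_pendants_connected k :
  connected_graph e -> connected_graph (add_pendants e w k).
Proof.
move=> e_conn; have connect_inl u v : connect (add_pendants e w k) (inl u) (inl v).
  have /connectP [p ep ->] := e_conn u v.
  apply/connectP; exists (map inl p); last by rewrite last_map.
  by move: ep; apply: homo_path.
have connect_wr i : connect (add_pendants e w k) (inl w) (inr i).
  by rewrite connect1 //= eqxx.
have connect_rw i : connect (add_pendants e w k) (inr i) (inl w).
  by rewrite connect1 //= eqxx.
case=> [u|i] [v|j]; first exact: connect_inl.
- exact: connect_trans (connect_inl u w) (connect_wr j).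
- exact: connect_trans (connect_rw i) (connect_inl w v).
- exact: connect_trans (connect_rw i) (connect_wr j).
Qed.

Variable k : nat.
Local Notation T := (V + 'I_k)%type.
Local Notation T1 := (V + 'I_1)%type.

Definition merge_pendants (a : T) : T1 := if a is inl v then inl v else inr ord0.
Definition lift_pendant (i : 'I_k) (a : T1) : T := if a is inl v then inl v else inr i.

Lemma gdist_merge_pendants (a b : T) : connected_graph e -> (0 < k)%N ->
  (forall i j, a = inr i -> b = inr j -> i = j) ->
  gdist (add_pendants e w k) a b
  = gdist (add_pendants e w 1) (merge_pendants a) (merge_pendants b).
Proof.
move=> e_conn k_gt0 same_pendant; symmetry; apply: eq_gdist; last first.
- exact: add_pendants_connected.
- by rewrite !card_sum !card_ord leq_add2l.
have [i ai bi] : exists2 i, lift_pendant i (merge_pendants a) = a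
                          & lift_pendant i (merge_pendants b) = b.
  case: a same_pendant => [u|i]; case: b => [v|j] same_pendant.
  - by exists (Ordinal k_gt0).
  - by exists j.
  - by exists i.
  - by exists i; rewrite //= (same_pendant i j).
move=> n; apply/idP/idP => walk_ab.
  by rewrite -ai -bi; apply: walkb_homo walk_ab; case=> [u|?] [v|?].
by apply: walkb_homo walk_ab; case=> [u|?] [v|?].
Qed.

Lemma gdist_pendants (i j : 'I_k) :
  i != j -> gdist (add_pendants e w k) (inr i) (inr j) = 2%N.
Proof.
move=> ij; rewrite /gdist.
have : (3 <= #|{: T}|)%N.
  have : (0 < #|V|)%N by apply/card_gt0P; exists w.
  by move: (ltn_ord i) (ltn_ord j) (ij); rewrite card_sum card_ord -val_eqE /=; lia.
case: #|{: T}| => [|[|[|N]]] // _ /=.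
have -> : walkb (add_pendants e w k) (inr i) (inr j) 0 = false.
  by apply/negbTE/negP => /walkbP [[|z p] [//= _ _ []] /eqP]; rewrite (negbTE ij).
have -> : walkb (add_pendants e w k) (inr i) (inr j) 1 = false.
  apply/negbTE/negP => /walkbP [[|z [|z' p]] [] //= _].
  by case: z => [v|j'] //= _ ->.
have -> // : walkb (add_pendants e w k) (inr i) (inr j) 2.
by apply/walkbP; exists [:: inl w; inr j]; rewrite /= !eqxx.
Qed.

End Pendants.

Section FinMatrix.
Variable R : pzRingType.

Definition finmx (T1 T2 : finType) (f : T1 -> T2 -> R) : 'M[R]_(#|T1|, #|T2|) :=
  \matrix_(i, j) f (enum_val i) (enum_val j).

Lemma eq_finmx (T1 T2 : finType) (f g : T1 -> T2 -> R) : f =2 g -> finmx f = finmx g.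
Proof. by move=> fg; apply/matrixP => i j; rewrite !mxE fg. Qed.

Lemma mul_finmx (T1 T2 T3 : finType) (f : T1 -> T2 -> R) (g : T2 -> T3 -> R) :
  finmx f *m finmx g = finmx (fun a c => \sum_b f a b * g b c).
Proof.
apply/matrixP => i j; rewrite !mxE (reindex (@enum_val T2 predT)) /=.
  by apply: eq_bigr => l _; rewrite !mxE.
by exists enum_rank => x _; [apply: enum_valK | apply: enum_rankK].
Qed.

Lemma trmx_finmx (T1 T2 : finType) (f : T1 -> T2 -> R) :
  (finmx f)^T = finmx (fun a b => f b a).
Proof. by apply/matrixP => i j; rewrite !mxE. Qed.

Lemma finmx1 (T : finType) : finmx (fun a b : T => (a == b)%:R) = 1%:M.
Proof. by apply/matrixP => i j; rewrite !mxE (inj_eq enum_val_inj). Qed.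

Lemma scale_finmx (T1 T2 : finType) (f : T1 -> T2 -> R) c :
  c *: finmx f = finmx (fun a b => c * f a b).
Proof. by apply/matrixP => i j; rewrite !mxE. Qed.

Lemma add_finmx (T1 T2 : finType) (f g : T1 -> T2 -> R) :
  finmx f + finmx g = finmx (fun a b => f a b + g a b).
Proof. by apply/matrixP => i j; rewrite !mxE. Qed.

Lemma mul_delta_enum_rank (T : finType) (x : T) :
  let ex : 'cV[R]_#|T| := delta_mx (enum_rank x) 0 in
  ex *m ex^T = finmx (fun a b => ((a == x) && (b == x))%:R).
Proof.
rewrite /= trmx_delta mul_delta_mx; apply/matrixP => i j; rewrite !mxE.
by rewrite -!(inj_eq enum_val_inj) !enum_rankK.
Qed.

End FinMatrix.

Lemma dsq_mxE (R : pzRingType) (V : finType) (e : rel V) :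
  dsq_mx R e = finmx (fun a b => (gdist e a b ^ 2)%:R).
Proof. by []. Qed.

Lemma sum_delta (R : pzSemiRingType) (T : finType) (x : T) (F : T -> R) :
  \sum_y (x == y)%:R * F y = F x.
Proof.
rewrite (bigD1 x) //= eqxx mul1r big1 ?addr0 // => y /negPf xy.
by rewrite eq_sym xy mul0r.
Qed.

Section PendantCongruence.
Variables (R : numFieldType) (V : finType) (e : rel V) (w : V) (n : nat).
Hypothesis e_conn : connected_graph e.
Local Notation T := (V + 'I_n.+1)%type.
Local Notation T1 := (V + 'I_1)%type.
Local Notation G := (add_pendants e w n.+1).
Local Notation G1 := (add_pendants e w 1).
Local Notation dsq d := ((d ^ 2)%N%:R : R).
Local Notation c := (4 - 4 / n.+1%:R : R).

Definition avg_pendants (a : T1) (b : T) : R :=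
  match a, b with
  | inl u, inl v => (u == v)%:R
  | inr _, inr _ => n.+1%:R^-1
  | _, _ => 0
  end.

Definition diff_pendants (r : 'I_n) (b : T) : R :=
  if b is inr i then (lift ord0 r == i)%:R - (ord0 == i)%:R else 0.

Lemma mulVn_natmul (x : R) : n.+1%:R^-1 * (x *+ n.+1) = x.
Proof. by rewrite -[x *+ _]mulr_natr mulrCA mulVf ?mulr1 // pnatr_eq0. Qed.

Lemma sum_avg_pendants_inl u (F : T -> R) :
  \sum_b avg_pendants (inl u) b * F b = F (inl u).
Proof.
by rewrite big_sumType /= [X in _ + X]big1 ?addr0 ?sum_delta // => i _; rewrite mul0r.
Qed.

Lemma sum_avg_pendants_inr z (F : T -> R) :
  \sum_b avg_pendants (inr z) b * F b = n.+1%:R^-1 * \sum_i F (inr i).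
Proof. by rewrite big_sumType /= big1 ?add0r ?mulr_sumr // => i _; rewrite mul0r. Qed.

Lemma sum_diff_pendants r (F : T -> R) :
  \sum_b diff_pendants r b * F b = F (inr (lift ord0 r)) - F (inr ord0).
Proof.
rewrite big_sumType /= big1 ?add0r => [|v _]; last by rewrite mul0r.
by under eq_bigr do rewrite mulrBl; rewrite sumrB !(sum_delta _ (fun i => F (inr i))).
Qed.

Lemma gdist_inl_inl u v : gdist G (inl u) (inl v) = gdist G1 (inl u) (inl v).
Proof. by rewrite gdist_merge_pendants. Qed.

Lemma gdist_inl_inr u i : gdist G (inl u) (inr i) = gdist G1 (inl u) (inr ord0).
Proof. by rewrite gdist_merge_pendants. Qed.

Lemma gdist_inr_inl i v : gdist G (inr i) (inl v) = gdist G1 (inr ord0) (inl v).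
Proof. by rewrite gdist_merge_pendants. Qed.

Lemma dsq_gdist_inr_inr i j : dsq (gdist G (inr i) (inr j)) = (i != j)%:R * 4.
Proof.
have [->|ij] := eqVneq i j; first by rewrite gdistxx mul0r.
by rewrite gdist_pendants // mul1r.
Qed.

Lemma sum_neq_pendant (i : 'I_n.+1) : \sum_j (j != i)%:R = n%:R :> R.
Proof.
rewrite (bigD1 i) //= eqxx add0r (eq_bigr (fun _ => 1)) => [|j ->] //.
by rewrite sumr_const cardC1 card_ord.
Qed.

Lemma avg_dsq_avg a b :
  \sum_t (\sum_s avg_pendants a s * dsq (gdist G s t)) * avg_pendants b t
  = dsq (gdist G1 a b) + c * ((a == inr ord0) && (b == inr ord0))%:R.
Proof.
under eq_bigr => t _ do rewrite mulrC.
case: b => [v|z]; [rewrite sum_avg_pendants_inl | rewrite (ord1 z) sum_avg_pendants_inr];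
  case: a => [u|z']; rewrite ?(ord1 z') ?andbF ?mulr0 ?addr0.
- by rewrite sum_avg_pendants_inl gdist_inl_inl.
- rewrite sum_avg_pendants_inr; under eq_bigr do rewrite gdist_inr_inl.
  by rewrite sumr_const card_ord mulVn_natmul.
- under eq_bigr do rewrite sum_avg_pendants_inl gdist_inl_inr.
  by rewrite sumr_const card_ord mulVn_natmul.
under eq_bigr do rewrite sum_avg_pendants_inr.
under eq_bigr => i _ do under eq_bigr => j _ do rewrite dsq_gdist_inr_inr.
rewrite eqxx gdistxx mulr1 add0r.
under eq_bigr => i _ do rewrite -mulr_suml sum_neq_pendant.
by rewrite sumr_const card_ord -mulr_natr; field; rewrite nat1r pnatr_eq0.
Qed.

Lemma avg_dsq_mx_avg :
  let ek : 'cV[R]_#|{: T1}| := delta_mx (enum_rank (inr ord0)) ord0 in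
  finmx avg_pendants *m dsq_mx R G *m (finmx avg_pendants)^T
  = dsq_mx R G1 + c *: (ek *m ek^T).
Proof.
rewrite /= mul_delta_enum_rank !dsq_mxE scale_finmx add_finmx trmx_finmx !mul_finmx.
exact: eq_finmx avg_dsq_avg.
Qed.

Lemma diff_dsq_mx : finmx diff_pendants *m dsq_mx R G = -4 *: finmx diff_pendants.
Proof.
rewrite dsq_mxE mul_finmx scale_finmx; apply: eq_finmx => r b.
rewrite sum_diff_pendants.
case: b => [v|j] /=; first by rewrite !gdist_inr_inl subrr mulr0.
by rewrite !dsq_gdist_inr_inr; case: (lift ord0 r == j); case: (ord0 == j) => /=; ring.
Qed.

Lemma avg_diff_tr : finmx avg_pendants *m (finmx diff_pendants)^T = 0.
Proof.
rewrite trmx_finmx mul_finmx; apply/matrixP => a r; rewrite !mxE.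
under eq_bigr do rewrite mulrC.
by rewrite sum_diff_pendants; case: (enum_val a) => [u|z]; rewrite /= ?subrr.
Qed.

Lemma row_free_avg_pendants : row_free (finmx avg_pendants).
Proof.
apply/row_freeP; exists (finmx (fun s b => (merge_pendants s == b)%:R)).
rewrite mul_finmx -finmx1; apply: eq_finmx => -[u|z] b.
  by rewrite sum_avg_pendants_inl.
by rewrite sum_avg_pendants_inr (ord1 z) sumr_const card_ord mulVn_natmul.
Qed.

Lemma row_free_diff_pendants : row_free (finmx diff_pendants).
Proof.
apply/row_freeP.
exists (finmx (fun s r => if s is inr i then (lift ord0 r == i)%:R else 0)).
rewrite mul_finmx -finmx1; apply: eq_finmx => r r'.
by rewrite sum_diff_pendants /= subr0 (inj_eq lift_inj) eq_sym.
Qed.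

End PendantCongruence.

Theorem proposition3p1 (R : rcfType) (V : finType) (e : rel V) (w : V) (k : nat)
  (e_sym : symmetric e) (e_irr : irreflexive e) (e_conn : connected_graph e)
  (hk : (2 <= k)%N) :
  let ek : 'cV[R]_#|{: (V + 'I_1)%type}| := delta_mx (enum_rank (inr ord0)) ord0 in
  neg_inertia (dsq_mx R (add_pendants e w k))
  = (k - 1 + neg_inertia (dsq_mx R (add_pendants e w 1)
                          + (4 - 4 / k%:R) *: (ek *m ek^T)))%N.
Proof.
case: k hk => [//|n] _ /=.
have D_sym := dsq_mx_sym R (add_pendants_sym w e_sym (k := n.+1)).
have c_lt0 : -4 < 0 :> R by rewrite oppr_lt0 ltr0n.
have card_split : #|{: V + 'I_n.+1}| = (#|{: V + 'I_1}| + #|'I_n|)%N.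
  by rewrite !card_sum !card_ord -addnA add1n.
rewrite (neg_inertia_deflation D_sym c_lt0 (diff_dsq_mx R w n e_conn)
  (avg_diff_tr R V n) (row_free_avg_pendants R V n) (row_free_diff_pendants R V n)
  card_split).
by have /= -> := avg_dsq_mx_avg R w n e_conn; rewrite card_ord subn1 addnC.
Qed.
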